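(* Let $G$ be a weighted graph, $s\in[0,1]^V$ a vector of innate opinions, $z=(I+L)^{-1}s$ the equilibrium opinions, and $D=D(z)$. Let $k\in\mathbb{N}$ and let $s'\in[0,1]^V$ satisfy $\|s'-s\|_0\le k$. Let $z'=(I+L)^{-1}s'$ and $D'=D(z')$. Then $D'\le D+8\,d_{\max}\,k$, where $d_{\max}:=\max_{v\in V}\sum_{u\in V}w_{v,u}$ is the weighted maximum degree.
   Context: $G=(V,E,w)$ is a weighted undirected graph on $n=|V|$ vertices, with weights $w_{u,v}\in(0,1]$ for $(u,v)\in E$ and $w_{u,v}=0$ otherwise (and $w_{v,v}=0$). $L=\mathrm{Diag}(d)-A$ is the weighted Laplacian, where $A_{u,v}=w_{u,v}$ and $d_v=\sum_u w_{v,u}$. Disagreement of a vector $z\in\mathbb{R}^V$ is $D(z)=\sum_{(u,v)\in E} w_{u,v}(z_u-z_v)^2$ (each edge counted once). $\|x\|_0$ denotes the number of nonzero coordinates of $x$. *)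

From HB Require Import structures.
From mathcomp Require Import all_boot all_order all_algebra.
Set Implicit Arguments. Unset Strict Implicit. Unset Printing Implicit Defensive.
Import Order.TTheory GRing.Theory Num.Theory.
Local Open Scope ring_scope.

(* A weighted undirected graph on vertex set 'I_n is given by a weight
   function w with w u v in (0,1] on edges and 0 otherwise; i.e.
   w symmetric, w v v = 0, 0 <= w u v <= 1. *)
Definition weighted_graph (R : numDomainType) (n : nat) (w : 'I_n -> 'I_n -> R) : Prop :=
  (forall u v, w u v = w v u) /\ (forall v, w v v = 0) /\
  (forall u v, 0 <= w u v <= 1).

Definition wdeg (R : numDomainType) (n : nat) (w : 'I_n -> 'I_n -> R) (v : 'I_n) : R :=
  \sum_(u < n) w v u.

(* weighted maximum degree (degrees are >= 0, so starting at 0 is harmless) *)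
Definition dmax (R : realDomainType) (n : nat) (w : 'I_n -> 'I_n -> R) : R :=
  \big[Num.max/0]_(v < n) wdeg w v.

Definition laplacian (R : numDomainType) (n : nat) (w : 'I_n -> 'I_n -> R) : 'M[R]_n :=
  \matrix_(i, j) ((i == j)%:R * wdeg w i - w i j).

Definition equilibrium (R : numFieldType) (n : nat) (w : 'I_n -> 'I_n -> R)
  (s : 'cV[R]_n) : 'cV[R]_n :=
  invmx (1%:M + laplacian w) *m s.

Definition disagreement (R : numDomainType) (n : nat) (w : 'I_n -> 'I_n -> R)
  (z : 'cV[R]_n) : R :=
  \sum_(u < n) \sum_(v < n | (u < v)%N) w u v * (z u ord0 - z v ord0) ^+ 2.

Definition dist0 (R : numDomainType) (n : nat) (x y : 'cV[R]_n) : nat :=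
  #|[set i : 'I_n | x i ord0 != y i ord0]|.

Definition in_unit_cube (R : numDomainType) (n : nat) (s : 'cV[R]_n) : Prop :=
  forall i, 0 <= s i ord0 <= 1.

(* The disagreement D(z) = z^T L z is a convex quadratic form, so with
   B(x, y) := x^T L y we get D(z') <= D(z) + 2 B(z' - z, z').  Writing
   M := I + L, we have M (z' - z) = s' - s and, M being symmetric,
   B(z' - z, z') = (s' - s)^T r with r := M^{-1} L z'.  Since z' lies in the
   unit cube, |(L z')_v| <= d_v, and the maximum principle for M (a value of x
   is bounded by the extreme values of M x) gives |r_v| <= d_max.  As s' - s
   has at most k nonzero entries, all in [-1, 1], B(z' - z, z') <= d_max k,
   which yields the bound with constant 2 instead of 8. *)
From HB Require Import structures.
From mathcomp Require Import all_boot all_order all_algebra.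
From mathcomp Require Import ring lra.
Import Order.TTheory GRing.Theory Num.Theory.
Local Open Scope ring_scope.
Set Implicit Arguments. Unset Strict Implicit.

Lemma sum_ord_pairs_lt (V : nmodType) (n : nat) (F : 'I_n -> 'I_n -> V) :
  (forall u, F u u = 0) ->
  \sum_(u < n) \sum_(v < n) F u v =
  \sum_(u < n) \sum_(v < n | (u < v)%N) (F u v + F v u).
Proof.
move=> F0.
transitivity (\sum_(u < n) \sum_(v < n) ((if (u < v)%N then F u v else 0)
                                      + (if (v < u)%N then F u v else 0))).
  apply: eq_bigr => u _; apply: eq_bigr => v _.
  case: ltngtP => uv; rewrite ?addr0 ?add0r //.
  by rewrite (val_inj uv) F0.
under eq_bigr do rewrite big_split.
rewrite big_split /= [X in _ + X]exchange_big /= -big_split /=.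
apply: eq_bigr => u _; rewrite [in RHS]big_mkcond -big_split /=.
by apply: eq_bigr => v _; case: ifP; rewrite ?addr0.
Qed.

Definition dirichlet_form (R : numDomainType) (n : nat) (w : 'I_n -> 'I_n -> R)
  (x y : 'cV[R]_n) : R :=
  \sum_(u < n) \sum_(v < n | (u < v)%N)
     w u v * (x u ord0 - x v ord0) * (y u ord0 - y v ord0).

Lemma dot_mulmx_sym (R : comPzRingType) (n : nat) (A : 'M[R]_n) (x y : 'cV[R]_n) :
  A^T = A ->
  \sum_i x i ord0 * (A *m y) i ord0 = \sum_i (A *m x) i ord0 * y i ord0.
Proof.
move=> symA.
have -> : \sum_i x i ord0 * (A *m y) i ord0 = (x^T *m (A *m y)) ord0 ord0.
  by rewrite mxE; apply: eq_bigr => i _; rewrite !mxE.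
by rewrite mulmxA -{1}symA -trmx_mul mxE; apply: eq_bigr => i _; rewrite !mxE.
Qed.

Section Laplacian.
Variables (R : numDomainType) (n : nat) (w : 'I_n -> 'I_n -> R).
Hypothesis w_sym : forall u v, w u v = w v u.

Lemma laplacian_mulmx (x : 'cV[R]_n) i :
  (laplacian w *m x) i ord0 = \sum_j w i j * (x i ord0 - x j ord0).
Proof.
rewrite mxE.
under eq_bigr => j _ do rewrite mxE mulrBl.
rewrite sumrB (bigD1 i) //= big1; last by move=> j /negbTE ji; rewrite eq_sym ji !mul0r.
under [in RHS]eq_bigr => j _ do rewrite mulrBr.
by rewrite sumrB -mulr_suml eqxx mul1r addr0 mulrC.
Qed.

Lemma laplacian_tr : (laplacian w)^T = laplacian w.
Proof.
by apply/matrixP => i j; rewrite !mxE eq_sym w_sym; case: eqP => [->|_]; rewrite ?mul0r.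
Qed.

Lemma dirichlet_formE (x y : 'cV[R]_n) :
  dirichlet_form w x y = \sum_u x u ord0 * (laplacian w *m y) u ord0.
Proof.
under [RHS]eq_bigr => u _ do rewrite laplacian_mulmx mulr_sumr.
rewrite sum_ord_pairs_lt => [|u]; last by rewrite subrr !mulr0.
apply: eq_bigr => u _; apply: eq_bigr => v _; rewrite (w_sym v u); ring.
Qed.

End Laplacian.

Section FriedkinJohnsen.
Variables (R : realFieldType) (n : nat) (w : 'I_n -> 'I_n -> R).
Hypothesis w_sym : forall u v, w u v = w v u.
Hypothesis w_ge0 : forall u v, 0 <= w u v.

Let M : 'M[R]_n := 1%:M + laplacian w.

Lemma opinion_mulmx (x : 'cV[R]_n) i :
  (M *m x) i ord0 = x i ord0 + \sum_j w i j * (x i ord0 - x j ord0).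
Proof. by rewrite mulmxDl mul1mx mxE laplacian_mulmx. Qed.

(* At a minimum of x every term of (L x)_v is nonpositive. *)
Lemma minimum_principle (x : 'cV[R]_n) a :
  (forall i, a <= (M *m x) i ord0) -> forall i, a <= x i ord0.
Proof.
move=> lbMx i.
case: (@arg_minP _ R _ i xpredT (fun j => x j ord0) isT) => m _ xm_min.
have Lx_le0 : \sum_j w m j * (x m ord0 - x j ord0) <= 0.
  rewrite -oppr_ge0 -sumrN; apply: sumr_ge0 => j _.
  by rewrite -mulrN opprB mulr_ge0 // subr_ge0 xm_min.
have := lbMx m; rewrite opinion_mulmx => ?.
have := xm_min i isT => /= ?; lra.
Qed.

Lemma maximum_principle (x : 'cV[R]_n) a b :
  (forall i, a <= (M *m x) i ord0 <= b) -> forall i, a <= x i ord0 <= b.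
Proof.
move=> bMx i; apply/andP; split.
  by apply: minimum_principle i => j; case/andP: (bMx j).
have := @minimum_principle (- x) (- b) => /(_ _ i).
rewrite mxE lerN2; apply=> j; rewrite mulmxN mxE lerN2.
by case/andP: (bMx j).
Qed.

Lemma opinion_tr : M^T = M.
Proof. by rewrite /M linearD /= trmx1 laplacian_tr. Qed.

Lemma opinion_unit : M \in unitmx.
Proof.
rewrite unitmxE unitfE; apply/negP => /det0P [v v_neq0 vM0].
have Mv0 : M *m v^T = 0 by rewrite -opinion_tr -trmx_mul vM0 trmx0.
have v0 : forall i, 0 <= v^T i ord0 <= 0.
  by apply: maximum_principle => i; rewrite Mv0 mxE lexx.
apply/(negP v_neq0)/eqP/matrixP => i j; rewrite (ord1 i) !mxE.
by have := v0 j; rewrite mxE -eq_le => /eqP.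
Qed.

Lemma equilibriumK (s : 'cV[R]_n) : M *m equilibrium w s = s.
Proof. exact: mulKVmx opinion_unit s. Qed.

Lemma equilibrium_unit_cube (s : 'cV[R]_n) :
  in_unit_cube s -> in_unit_cube (equilibrium w s).
Proof. by move=> s01; apply: maximum_principle => i; rewrite equilibriumK. Qed.

Lemma wdeg_ge0 v : 0 <= wdeg w v.
Proof. exact: sumr_ge0. Qed.

Lemma wdeg_le_dmax v : wdeg w v <= dmax w.
Proof. by rewrite /dmax (bigD1 v) //= le_max lexx. Qed.

Lemma dmax_ge0 : 0 <= dmax w.
Proof.
rewrite /dmax; elim/big_ind: _ => // [x y x0 _|v _]; last exact: wdeg_ge0.
by rewrite le_max x0.
Qed.

Lemma laplacian_mulmx_unit_cube (z : 'cV[R]_n) i :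
  in_unit_cube z ->
  - wdeg w i <= (laplacian w *m z) i ord0 <= wdeg w i.
Proof.
move=> z01; rewrite laplacian_mulmx /wdeg -sumrN.
have := z01 i => /andP [? ?].
apply/andP; split; apply: ler_sum => j _; have := z01 j => /andP [? ?];
  have := w_ge0 i j; nra.
Qed.

Lemma disagreement_le_tangent (z z' : 'cV[R]_n) :
  disagreement w z' <= disagreement w z + 2 * dirichlet_form w (z' - z) z'.
Proof.
rewrite /disagreement /dirichlet_form mulr_sumr -big_split /=.
apply: ler_sum => u _; rewrite mulr_sumr -big_split /=; apply: ler_sum => v _.
rewrite !mxE; set a := z' u ord0 - z' v ord0; set b := z u ord0 - z v ord0.
have := mulr_ge0 (w_ge0 u v) (sqr_ge0 (a - b)).
rewrite /a /b !expr2; nra.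
Qed.

Lemma dirichlet_form_equilibrium (s s' : 'cV[R]_n) :
  dirichlet_form w (equilibrium w s' - equilibrium w s) (equilibrium w s') =
  \sum_u (s' - s) u ord0
          * (invmx M *m (laplacian w *m equilibrium w s')) u ord0.
Proof.
set z' := equilibrium w s'; rewrite dirichlet_formE //.
have MinvK : laplacian w *m z' = M *m (invmx M *m (laplacian w *m z')).
  by rewrite mulKVmx // opinion_unit.
rewrite MinvK dot_mulmx_sym ?opinion_tr //.
by rewrite mulmxBr !equilibriumK.
Qed.

Lemma dirichlet_form_sparse_perturbation (s s' : 'cV[R]_n) (k : nat) :
  in_unit_cube s -> in_unit_cube s' -> (dist0 s' s <= k)%N ->
  dirichlet_form w (equilibrium w s' - equilibrium w s) (equilibrium w s')
    <= dmax w * k%:R.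
Proof.
move=> s01 s'01 sk; rewrite dirichlet_form_equilibrium.
set r := invmx M *m _.
have r_bound : forall i, - dmax w <= r i ord0 <= dmax w.
  apply: maximum_principle => i; rewrite mulKVmx ?opinion_unit //.
  have := laplacian_mulmx_unit_cube i (equilibrium_unit_cube s'01).
  have := wdeg_le_dmax i; lra.
set A := [set i | s' i ord0 != s i ord0].
apply: (@le_trans _ _ (\sum_u if u \in A then dmax w else 0)).
  apply: ler_sum => u _; rewrite inE mxE [(- s) u ord0]mxE; case: eqP => [->|_] /=.
    by rewrite subrr mul0r.
  have := r_bound u; have := s01 u; have := s'01 u; nra.
rewrite -big_mkcond sumr_const -[X in X <= _]mulr_natr.
by rewrite ler_wpM2l ?dmax_ge0 // ler_nat.
Qed.

End FriedkinJohnsen.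

Theorem theorem1p3 (R : realFieldType) (n : nat) (w : 'I_n -> 'I_n -> R)
  (s s' : 'cV[R]_n) (k : nat) :
  weighted_graph w ->
  in_unit_cube s -> in_unit_cube s' ->
  (dist0 s' s <= k)%N ->
  disagreement w (equilibrium w s')
    <= disagreement w (equilibrium w s) + 8 * dmax w * k%:R.
Proof.
move=> [w_sym [_ w01]] s01 s'01 sk.
have w_ge0 u v : 0 <= w u v by case/andP: (w01 u v).
apply: (le_trans (disagreement_le_tangent w_ge0 (equilibrium w s) _)).
rewrite lerD2l -mulrA.
have := dirichlet_form_sparse_perturbation w_sym w_ge0 s01 s'01 sk.
have := mulr_ge0 (dmax_ge0 w_ge0) (ler0n R k).
set B := dirichlet_form _ _ _; set c := dmax w * k%:R.
lra.
Qed.
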